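(* Let $\mathbf{H}$ be a finite commutative semihypergroup with states $e_1,\dots,e_n$ that is derived from a group. Then any two columns $a_{i,j}$ and $a_{k,l}$ ($1\le i,j,k,l\le n$) are rearrangements of each other, i.e. they have the same multiset of entries. In particular the cube $C=(a_{i,j}(k))_{i,j,k}$ has at most $n$ distinct entries.
   Context: A finite commutative semihypergroup $\mathbf{H}$ with $n$ states $e_1,\dots,e_n$ is given by a convolution $e_i*e_j=\sum_{k=1}^n a_{i,j}(k)e_k$ ($i,j=1,\dots,n$), extended bilinearly, where $a_{i,j}(k)\ge 0$, $\sum_{k=1}^n a_{i,j}(k)=1$ for all $i,j$, the convolution is associative and commutative ($a_{i,j}(k)=a_{j,i}(k)$). Let $a_{i,j}\in\mathbb{R}^n$ denote the column vector $(a_{i,j}(1),\dots,a_{i,j}(n))^T$; let $A_i$ be the $n\times n$ matrix with columns $a_{i,1},\dots,a_{i,n}$ and $B_i$ the matrix with columns $a_{1,i},\dots,a_{n,i}$. $\mathbf{H}$ is called derived from a group if it satisfies condition (A): the set $\{a_{i,j}: 1\le i,j\le n\}$ contains exactly $n$ distinct vectors, and for each $i$ the columns of $A_i$ are linearly independent and the columns of $B_i$ are linearly independent. *)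

From HB Require Import structures.
From mathcomp Require Import all_boot all_order all_algebra.
Set Implicit Arguments. Unset Strict Implicit. Unset Printing Implicit Defensive.
Import Order.TTheory GRing.Theory Num.Theory.
Local Open Scope ring_scope.

(* Structure constants: a i j k = a_{i,j}(k), i.e. e_i * e_j = sum_k a i j k e_k. *)

Definition acol (R : realFieldType) (n : nat) (a : 'I_n -> 'I_n -> 'I_n -> R)
  (i j : 'I_n) : 'cV[R]_n := \col_k a i j k.

Definition is_comm_semihypergroup (R : realFieldType) (n : nat)
  (a : 'I_n -> 'I_n -> 'I_n -> R) : Prop :=
  [/\ (forall i j k, 0 <= a i j k),
      (forall i j, \sum_(k < n) a i j k = 1),
      (forall i j k, a i j k = a j i k) &
      (* associativity: (e_i * e_j) * e_l = e_i * (e_j * e_l) *)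
      (forall i j l m,
         \sum_(k < n) a i j k * a k l m = \sum_(k < n) a j l k * a i k m)].

Definition Amat (R : realFieldType) (n : nat) (a : 'I_n -> 'I_n -> 'I_n -> R)
  (i : 'I_n) : 'M[R]_n := \matrix_(k < n, j < n) a i j k.
Definition Bmat (R : realFieldType) (n : nat) (a : 'I_n -> 'I_n -> 'I_n -> R)
  (i : 'I_n) : 'M[R]_n := \matrix_(k < n, j < n) a j i k.

Definition cols_independent (R : realFieldType) (n : nat) (M : 'M[R]_n) : bool :=
  row_free M^T.

Definition derived_from_group (R : realFieldType) (n : nat)
  (a : 'I_n -> 'I_n -> 'I_n -> R) : Prop :=
  [/\ size (undup [seq acol a ij.1 ij.2 | ij : 'I_n * 'I_n]) = n,
      (forall i, cols_independent (Amat a i)) &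
      (forall i, cols_independent (Bmat a i))].

(* Fix a state e_i.  Its row {a_{i,j}} consists of n distinct vectors (the
   columns of A_i are independent), so it exhausts the n vectors a_{k,l};
   likewise for the columns B_l.  Hence a_{k,l} = a_{i,s(k)} for a permutation
   s, and associativity of (e_i * e_j) * e_l = e_i * (e_j * e_l) becomes
   A_i x = A_i a_{j,l} with x the entries of a_{i,j} permuted by s; cancelling
   A_i, a_{j,l} is a rearrangement of a_{i,j}.  Two such steps
   a_{i,j} ~ a_{j,k} ~ a_{k,l} connect any two columns. *)

From HB Require Import structures.
From mathcomp Require Import all_boot all_order all_algebra.
From mathcomp Require Import fingroup perm.
Import Order.TTheory GRing.Theory Num.Theory.
Local Open Scope ring_scope.

Lemma cols_independent_mulmx_inj {R : realFieldType} {n : nat} {M : 'M[R]_n} :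
  cols_independent M -> @injective 'cV[R]_n _ (mulmx M).
Proof.
move=> /row_free_inj freeMT x y eq_Mxy; apply: trmx_inj; apply: freeMT.
by rewrite /= -!trmx_mul eq_Mxy.
Qed.

Lemma cols_independent_col_inj {R : realFieldType} {n : nat} {M : 'M[R]_n} :
  cols_independent M -> injective (fun j => col j M).
Proof.
move=> /cols_independent_mulmx_inj injM j j'; rewrite !colE => /injM.
move=> /matrixP /(_ j 0); rewrite !mxE !eqxx /=.
by case: eqVneq => // _ /eqP; rewrite oner_eq0.
Qed.

Lemma inj_codom_exhaustive {T : eqType} {n : nat} {f : 'I_n -> T} {s : seq T} :
  injective f -> {subset codom f <= s} -> (size (undup s) <= n)%N ->
  {subset s <= codom f}.
Proof.
move=> injf sub_fs size_s x sx.
have uniq_f : uniq (codom f) by rewrite map_inj_uniq ?enum_uniq.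
have sub_fus : {subset codom f <= undup s} by move=> y /sub_fs; rewrite mem_undup.
have [|_ eq_f] := uniq_min_size uniq_f sub_fus; first by rewrite size_codom card_ord.
by rewrite eq_f mem_undup.
Qed.

Lemma perm_eq_map_enum_inj {T : finType} {U : eqType} {g : T -> T} (x : T -> U) :
  injective g -> perm_eq [seq x (g m) | m <- enum T] [seq x m | m <- enum T].
Proof.
move=> injg; rewrite (map_comp x g); apply: perm_map.
apply: uniq_perm; [by rewrite map_inj_uniq ?enum_uniq | exact: enum_uniq | move=> y].
by rewrite mem_enum; apply: injF_onto.
Qed.

Lemma col_Amat (R : realFieldType) (n : nat) (a : 'I_n -> 'I_n -> 'I_n -> R) i j :
  col j (Amat a i) = acol a i j.
Proof. by apply/matrixP=> k z; rewrite !mxE. Qed.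

Lemma col_Bmat (R : realFieldType) (n : nat) (a : 'I_n -> 'I_n -> 'I_n -> R) i j :
  col j (Bmat a i) = acol a j i.
Proof. by apply/matrixP=> k z; rewrite !mxE. Qed.

Section DerivedFromGroup.

Context {R : realFieldType} {n : nat} {a : 'I_n -> 'I_n -> 'I_n -> R}.

Hypothesis assoc : forall i j l m,
  \sum_(k < n) a i j k * a k l m = \sum_(k < n) a j l k * a i k m.
Hypothesis size_cols : size (undup [seq acol a ij.1 ij.2 | ij : 'I_n * 'I_n]) = n.
Hypothesis Amat_free : forall i, cols_independent (Amat a i).
Hypothesis Bmat_free : forall i, cols_independent (Bmat a i).

Lemma acol_injr i : injective (acol a i).
Proof.
move=> j j'; rewrite -!col_Amat; exact: cols_independent_col_inj (Amat_free i) j j'.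
Qed.

Lemma acol_injl l : injective (acol a ^~ l).
Proof.
move=> k k'; rewrite /= -!col_Bmat; exact: cols_independent_col_inj (Bmat_free l) k k'.
Qed.

Lemma acol_in_row i k l : exists j, acol a k l = acol a i j.
Proof.
have mem_cols k' l' : acol a k' l' \in [seq acol a ij.1 ij.2 | ij : 'I_n * 'I_n].
  by apply/mapP; exists (k', l'); rewrite ?mem_enum.
have sub_row : {subset codom (acol a i) <= [seq acol a ij.1 ij.2 | ij : 'I_n * 'I_n]}.
  by move=> _ /codomP [j ->].
have /codomP [j ->] := inj_codom_exhaustive (acol_injr i) sub_row
  (eq_leq size_cols) _ (mem_cols k l).
by exists j.
Qed.

Lemma acol_column_perm i l :
  exists s : {perm 'I_n}, forall k, acol a k l = acol a i (s k).
Proof.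
have [f eq_f] := fin_all_exists (fun k => acol_in_row i k l).
have f_inj : injective f by move=> k k' eq_fk; apply: (acol_injl l); rewrite !eq_f eq_fk.
by exists (perm f_inj) => k; rewrite permE.
Qed.

Lemma acol_shift_perm i j l : exists s : {perm 'I_n}, forall k, a j l (s k) = a i j k.
Proof.
have [s eq_s] := acol_column_perm i l.
exists s; suff eq_x : \col_p a i j (s^-1 p)%g = acol a j l.
  by move=> k; move/matrixP/(_ (s k) 0): eq_x; rewrite !mxE permK.
apply: (cols_independent_mulmx_inj (Amat_free i)); apply/matrixP=> m z.
have a_s k : a k l m = a i (s k) m.
  by move/matrixP/(_ m 0): (eq_s k); rewrite !mxE.
rewrite !mxE (reindex_inj (@perm_inj _ s)) /=.
under eq_bigr do rewrite !mxE permK mulrC -a_s.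
by rewrite assoc; apply: eq_bigr => k _; rewrite !mxE mulrC.
Qed.

Lemma perm_eq_acol_shift i j l :
  perm_eq [seq a i j m | m <- enum 'I_n] [seq a j l m | m <- enum 'I_n].
Proof.
have [s eq_s] := acol_shift_perm i j l.
rewrite -(eq_map eq_s); exact: perm_eq_map_enum_inj (@perm_inj _ s).
Qed.

Lemma perm_eq_acol i j k l :
  perm_eq [seq a i j m | m <- enum 'I_n] [seq a k l m | m <- enum 'I_n].
Proof. exact: perm_trans (perm_eq_acol_shift i j k) (perm_eq_acol_shift j k l). Qed.

Lemma size_undup_entries (i0 : 'I_n) :
  (size (undup [seq a ijk.1.1 ijk.1.2 ijk.2 | ijk : ('I_n * 'I_n) * 'I_n]) <= n)%N.
Proof.
have entries_in_row : {subset undup [seq a ijk.1.1 ijk.1.2 ijk.2 | ijk : ('I_n * 'I_n) * 'I_n]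
                        <= [seq a i0 i0 m | m <- enum 'I_n]}.
  move=> x; rewrite mem_undup => /mapP [[[i j] k] _ ->] /=.
  by rewrite -(perm_mem (perm_eq_acol i j i0 i0)); apply: map_f; rewrite mem_enum.
rewrite -[n in (_ <= n)%N]size_enum_ord -(size_map (a i0 i0)).
exact: uniq_leq_size (undup_uniq _) entries_in_row.
Qed.

End DerivedFromGroup.

Theorem corollary1 (R : realFieldType) (n : nat)
  (a : 'I_n -> 'I_n -> 'I_n -> R) :
  is_comm_semihypergroup a -> derived_from_group a ->
  (forall i j k l : 'I_n,
     perm_eq [seq a i j m | m <- enum 'I_n] [seq a k l m | m <- enum 'I_n]) /\
  (size (undup [seq a ijk.1.1 ijk.1.2 ijk.2 | ijk : ('I_n * 'I_n) * 'I_n]) <= n)%N.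
Proof.
move=> [_ _ _ assoc] [size_cols A_free B_free].
split; first exact: perm_eq_acol assoc size_cols A_free B_free.
case: n => [|n] in a assoc size_cols A_free B_free *.
  apply: leq_trans (size_undup _) _.
  by rewrite size_map -cardE !card_prod !card_ord.
exact: size_undup_entries assoc size_cols A_free B_free ord0.
Qed.
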